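(* Let $I\unlhd K[x_1,\dots,x_n]$ be a homogeneous ideal and let $w\in\mathbb R^n$. Then the map $\{-1\}\times\mathbb R^n\to\mathbb R^n$, $(-1,v)\mapsto v$, maps $C_{(-1,w)}(\pi^{-1}I)\cap(\{-1\}\times\mathbb R^n)$ into the Gröbner polytope $C_{\nu,w}(I)$.
   Context: Let $K$ be a complete field with a non-trivial discrete valuation $\nu$ (normalized with $\nu(p)=1$) and a uniformizing parameter $p$. Let $\mathcal O_K$ be its ring of integers and $\mathfrak K$ its residue field. Let $R\subseteq\mathcal O_K$ be a dense noetherian subring with $p\in R$. The map $\pi:R[[t]][x]\to\mathcal O_K[x]\subseteq K[x]$ sends $t\mapsto p$, and $\pi^{-1}I$ denotes the preimage. For $f=\sum_\alpha c_\alpha x^\alpha\in K[x]$, $\operatorname{in}_{\nu,w}(f)=\sum\overline{c_\alpha p^{-\nu(c_\alpha)}}x^\alpha\in\mathfrak K[x]$, summed over the $\alpha$ with $c_\alpha\ne0$ and $w\cdot\alpha-\nu(c_\alpha)$ maximal. $\operatorname{in}_{\nu,w}(I)$ is the ideal generated by these initial forms. For a homogeneous $I$, the Gröbner polytope is $C_{\nu,w}(I)=\overline{\{v\in\mathbb R^n:\operatorname{in}_{\nu,v}(I)=\operatorname{in}_{\nu,w}(I)\}}$ (Euclidean closure). For $f=\sum c_{\alpha,\beta}t^\beta x^\alpha\in R[[t]][x]$ and $u\in\mathbb R_{<0}\times\mathbb R^n$, $\operatorname{in}_u(f)$ is the sum of the terms with $u\cdot(\beta,\alpha)$ maximal. $\operatorname{in}_u(J)\unlhd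 R[t,x]$ is generated by these initial forms. For an $x$-homogeneous ideal $J\unlhd R[[t]][x]$ (generated by elements that are homogeneous as polynomials in $x$ with coefficients in $R[[t]]$), the Gröbner cone is $C_u(J)=\overline{\{v\in\mathbb R_{<0}\times\mathbb R^n:\operatorname{in}_v(J)=\operatorname{in}_u(J)\}}$. *)

From HB Require Import structures.
From mathcomp Require Import all_boot all_order all_algebra.
From mathcomp Require Import reals.
From mathcomp Require Import mpoly.

Set Implicit Arguments.
Unset Strict Implicit.
Unset Printing Implicit Defensive.

Import Order.TTheory GRing.Theory Num.Theory.
Local Open Scope ring_scope.

Definition is_ideal (P : comPzRingType) (I : P -> Prop) : Prop :=
  I 0 /\ (forall a b, I a -> I b -> I (a + b)) /\ (forall c a, I a -> I (c * a)).

(* Ideal generated by S inside the subring A of P (A = coefficient ring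
   of the ambient ring): finite A-combinations of elements of S. *)
Definition ideal_gen (P : comPzRingType) (A S : P -> Prop) (g : P) : Prop :=
  exists (N : nat) (h s : nat -> P),
    (forall i, (i < N)%N -> A (h i) /\ S (s i)) /\ g = \sum_(i < N) h i * s i.

Definition same_ideal (P : Type) (I J : P -> Prop) : Prop := forall g, I g <-> J g.

(* Euclidean closure in R^d (R^d with its product = Euclidean topology). *)
Definition in_closure (R : realType) (d : nat) (S : ('I_d -> R) -> Prop)
  (v : 'I_d -> R) : Prop :=
  forall e : R, 0 < e -> exists s, S s /\ forall i, `|s i - v i| < e.

(* The valued field K.  nu is only meaningful on nonzero elements;     *)
(* vge nu x N means nu(x) >= N with the convention nu(0) = +oo.        *)

Definition vge (K : fieldType) (nu : K -> int) (x : K) (N : int) : Prop :=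
  x = 0 \/ N <= nu x.

Definition in_OK (K : fieldType) (nu : K -> int) (x : K) : Prop := vge nu x 0.

Definition is_discrete_valuation (K : fieldType) (nu : K -> int) : Prop :=
  (forall x y, x != 0 -> y != 0 -> nu (x * y) = nu x + nu y) /\
  (forall x y, x != 0 -> y != 0 -> x + y != 0 ->
     Num.min (nu x) (nu y) <= nu (x + y)).

Definition val_complete (K : fieldType) (nu : K -> int) : Prop :=
  forall a : nat -> K,
    (forall N : int, exists M, forall m l, (M <= m)%N -> (M <= l)%N ->
        vge nu (a m - a l) N) ->
    exists L, forall N : int, exists M, forall m, (M <= m)%N -> vge nu (a m - L) N.

Definition is_residue_map (K k : fieldType) (nu : K -> int) (res : K -> k) : Prop :=
  (forall x y, in_OK nu x -> in_OK nu y -> res (x + y) = res x + res y) /\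
  (forall x y, in_OK nu x -> in_OK nu y -> res (x * y) = res x * res y) /\
  res 1 = 1 /\
  (forall a : k, exists x, in_OK nu x /\ res x = a) /\
  (forall x, in_OK nu x -> (res x = 0 <-> vge nu x 1)).

Definition is_subring (K : fieldType) (Rs : K -> Prop) : Prop :=
  Rs 0 /\ Rs 1 /\ (forall x y, Rs x -> Rs y -> Rs (x - y)) /\
  (forall x y, Rs x -> Rs y -> Rs (x * y)).

Definition is_noetherian (K : fieldType) (Rs : K -> Prop) : Prop :=
  forall J : K -> Prop,
    (forall x, J x -> Rs x) -> J 0 ->
    (forall x y, J x -> J y -> J (x + y)) ->
    (forall r x, Rs r -> J x -> J (r * x)) ->
    exists (N : nat) (s : nat -> K), (forall i, (i < N)%N -> J (s i)) /\
      forall x, J x -> exists c : nat -> K, (forall i, Rs (c i)) /\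
        x = \sum_(i < N) c i * s i.

Definition is_dense_in_OK (K : fieldType) (nu : K -> int) (Rs : K -> Prop) : Prop :=
  forall x, in_OK nu x -> forall N : int, exists r, Rs r /\ vge nu (x - r) N.

Definition wdot (R : realType) (n : nat) (w : 'I_n -> R) (m : 'X_{1..n}) : R :=
  \sum_(i < n) w i * (m i)%:R.

Definition is_homog (K : fieldType) (n : nat) (f : {mpoly K[n]}) : Prop :=
  forall m m', m \in msupp f -> m' \in msupp f -> mdeg m = mdeg m'.

Definition is_homog_ideal (K : fieldType) (n : nat) (I : {mpoly K[n]} -> Prop) : Prop :=
  is_ideal I /\
  exists S : {mpoly K[n]} -> Prop, (forall f, S f -> is_homog f) /\
    same_ideal I (ideal_gen (fun _ => True) S).

Definition in_nu (K k : fieldType) (R : realType) (n : nat) (nu : K -> int)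
  (res : K -> k) (p : K) (w : 'I_n -> R) (f : {mpoly K[n]}) : {mpoly k[n]} :=
  \sum_(m <- msupp f |
          all (fun m' => wdot w m' - (nu f@_m')%:~R <= wdot w m - (nu f@_m)%:~R)
              (msupp f))
     res (f@_m * p ^ (- nu f@_m)) *: 'X_[m].

Definition in_nu_ideal (K k : fieldType) (R : realType) (n : nat) (nu : K -> int)
  (res : K -> k) (p : K) (w : 'I_n -> R) (I : {mpoly K[n]} -> Prop) :
  {mpoly k[n]} -> Prop :=
  ideal_gen (fun _ => True) (fun h => exists f, I f /\ h = in_nu nu res p w f).

Definition groebner_polytope (K k : fieldType) (R : realType) (n : nat)
  (nu : K -> int) (res : K -> k) (p : K) (I : {mpoly K[n]} -> Prop)
  (w : 'I_n -> R) : ('I_n -> R) -> Prop :=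
  in_closure (fun v => same_ideal (in_nu_ideal nu res p v I) (in_nu_ideal nu res p w I)).

(* R[[t]][x].  An element is encoded by its coefficient function       *)
(* F alpha beta = coefficient of t^beta x^alpha (values in K).         *)

Definition pstx (K : fieldType) (n : nat) := 'X_{1..n} -> nat -> K.

Definition in_RtX (K : fieldType) (n : nat) (Rs : K -> Prop) (F : pstx K n) : Prop :=
  (forall a b, Rs (F a b)) /\
  exists s : seq 'X_{1..n}, forall a, a \notin s -> forall b, F a b = 0.

(* pi F = g : each coefficient of g is sum_beta F alpha beta p^beta
   (convergent series in the valuation topology). *)
Definition pi_rel (K : fieldType) (n : nat) (nu : K -> int) (p : K)
  (F : pstx K n) (g : {mpoly K[n]}) : Prop :=
  forall a, forall N : int, exists M, forall m, (M <= m)%N ->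
    vge nu (g@_a - \sum_(b < m) F a b * p ^+ b) N.

Definition pi_preimage (K : fieldType) (n : nat) (nu : K -> int) (Rs : K -> Prop)
  (p : K) (I : {mpoly K[n]} -> Prop) (F : pstx K n) : Prop :=
  in_RtX Rs F /\ exists g, pi_rel nu p F g /\ I g.

(* R[t,x] is encoded inside K[t,x] = {mpoly K[n.+1]}: variable 0 is t,
   variable (lift ord0 i) is x_i; coefficients lie in Rs. *)
Definition coeffs_in (K : fieldType) (n : nat) (Rs : K -> Prop)
  (h : {mpoly K[n.+1]}) : Prop := forall m, Rs h@_m.

Definition x_part (n : nat) (m : 'X_{1..n.+1}) : 'X_{1..n} :=
  [multinom m (lift ord0 i) | i < n].

Definition wt (R : realType) (n : nat) (u : 'I_n.+1 -> R) (b : nat) (a : 'X_{1..n}) : R :=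
  u ord0 * b%:R + \sum_(i < n) u (lift ord0 i) * (a i)%:R.

Definition init_term (K : fieldType) (R : realType) (n : nat) (u : 'I_n.+1 -> R)
  (F : pstx K n) (m : 'X_{1..n.+1}) : Prop :=
  F (x_part m) (m ord0) != 0 /\
  forall a b, F a b != 0 -> wt u b a <= wt u (m ord0) (x_part m).

Definition is_init_u (K : fieldType) (R : realType) (n : nat) (u : 'I_n.+1 -> R)
  (F : pstx K n) (g : {mpoly K[n.+1]}) : Prop :=
  forall m, (init_term u F m -> g@_m = F (x_part m) (m ord0)) /\
            (~ init_term u F m -> g@_m = 0).

Definition in_u_ideal (K : fieldType) (R : realType) (n : nat) (Rs : K -> Prop)
  (u : 'I_n.+1 -> R) (J : pstx K n -> Prop) : {mpoly K[n.+1]} -> Prop :=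
  ideal_gen (coeffs_in Rs) (fun g => exists F, J F /\ is_init_u u F g).

Definition groebner_cone (K : fieldType) (R : realType) (n : nat) (Rs : K -> Prop)
  (J : pstx K n -> Prop) (u : 'I_n.+1 -> R) : ('I_n.+1 -> R) -> Prop :=
  in_closure (fun v => v ord0 < 0 /\ same_ideal (in_u_ideal Rs v J) (in_u_ideal Rs u J)).

Definition ext_vec (R : realType) (n : nat) (c : R) (v : 'I_n -> R) : 'I_n.+1 -> R :=
  fun i => if unlift ord0 i is Some j then v j else c.

From HB Require Import structures.
From mathcomp Require Import all_boot all_order all_algebra.
From mathcomp Require Import reals boolp.
From mathcomp Require Import mpoly.
From mathcomp Require Import ring lra.
From Stdlib Require Import ClassicalEpsilon.
Import Order.TTheory GRing.Theory Num.Theory.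
Local Open Scope ring_scope.
Set Implicit Arguments.
Unset Strict Implicit.
Unset Printing Implicit Defensive.

(* Let u = (-1, v).  Substituting t := 1 and reducing coefficients modulo the
   maximal ideal of O_K is a map phi : R[t,x] -> k[x] that is additive and
   multiplicative on polynomials with integral coefficients.  If pi F = g, only
   the terms t^b x^a of F with b the t-adic order of the x^a-coefficient series can
   be u-initial, and comparing b with the valuation of the x^a-coefficient of g
   shows that phi (in_u F) is either 0 or in_{nu,v}(g).  Conversely, for f in I,
   expanding the coefficients of p^j f p-adically with digits in R that are 0 or
   units gives F in pi^-1 I with phi (in_u F) = in_{nu,v}(f).  So in_{nu,v}(I) is
   generated by phi (in_u(pi^-1 I)) and is determined by in_u(pi^-1 I).  Finally
   in_u(pi^-1 I) only depends on the ray through u, and a point u' of the cone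
   close to (-1, v) with u'_0 < 0 gives the point u'_x / (-u'_0) close to v. *)

Lemma mcoeff_sumX (L : nzRingType) (n : nat) (s : seq 'X_{1..n}) (Q : pred 'X_{1..n})
    (c : 'X_{1..n} -> L) (m : 'X_{1..n}) : uniq s ->
  (\sum_(m' <- s | Q m') c m' *: 'X_[m'])@_m = if (m \in s) && Q m then c m else 0.
Proof.
elim: s => [|x s IH] /=; first by rewrite big_nil mcoeff0.
case/andP => xs /IH {}IH; rewrite big_cons in_cons.
have [mx|mx] := eqVneq m x.
  subst m; rewrite (negbTE xs) /= in IH.
  by case: ifP => Qx /=; rewrite ?mcoeffD ?mcoeffZ ?mcoeffX ?eqxx ?mulr1 IH ?addr0.
by case: ifP => _; rewrite ?mcoeffD ?mcoeffZ ?mcoeffX 1?eq_sym ?(negbTE mx) ?mulr0 ?add0r IH.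
Qed.

Lemma seq_argmax (T : eqType) (d : Order.disp_t) (O : orderType d) (f : T -> O)
    (s : seq T) x :
  x \in s -> exists2 y, y \in s & forall z, z \in s -> (f z <= f y)%O.
Proof.
elim: s x => [//|a s IH] x _; case: s IH => [|b s] IH.
  by exists a => [|z]; rewrite ?mem_head // mem_seq1 => /eqP ->.
have [y ys ymax] := IH b (mem_head _ _).
have [ay|ya] := leP (f a) (f y).
  by exists y => [|z]; rewrite in_cons ?ys ?orbT // => /orP[/eqP ->|/ymax].
exists a => [|z]; first exact: mem_head.
by rewrite in_cons => /orP[/eqP ->//|/ymax/le_trans]; apply; apply: ltW.
Qed.

Section IdealGen.
Variables (P : comPzRingType) (A S : P -> Prop).

Lemma ideal_gen0 : ideal_gen A S 0.
Proof. by exists 0%N, (fun _ => 0), (fun _ => 0); rewrite big_ord0. Qed.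

Lemma ideal_gen_mem x : A 1 -> S x -> ideal_gen A S x.
Proof.
by move=> A1 Sx; exists 1%N, (fun _ => 1), (fun _ => x); rewrite big_ord1 mul1r.
Qed.

Lemma ideal_genD x y : ideal_gen A S x -> ideal_gen A S y -> ideal_gen A S (x + y).
Proof.
move=> [N1 [h1 [s1 [H1 ->]]]] [N2 [h2 [s2 [H2 ->]]]].
pose glue (f1 f2 : nat -> P) i := if (i < N1)%N then f1 i else f2 (i - N1)%N.
exists (N1 + N2)%N, (glue h1 h2), (glue s1 s2); split.
  move=> i lt_i; rewrite /glue; case: ifP => [|/negbT]; first exact: H1.
  by rewrite -leqNgt => le_i; apply: H2; rewrite ltn_subLR.
rewrite big_split_ord /glue; congr (_ + _); apply: eq_bigr => i _ /=.
  by rewrite ltn_ord.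
by rewrite ltnNge leq_addr /= addKn.
Qed.

Lemma ideal_gen_sum N (f : nat -> P) :
  (forall i, (i < N)%N -> ideal_gen A S (f i)) -> ideal_gen A S (\sum_(i < N) f i).
Proof.
elim: N => [|N IH] hf; first by rewrite big_ord0; apply: ideal_gen0.
rewrite big_ord_recr /=; apply: ideal_genD; last exact: hf.
by apply: IH => i lt_i; apply: hf; apply: ltnW.
Qed.

End IdealGen.

Lemma ideal_genMl (P : comPzRingType) (S : P -> Prop) c x :
  ideal_gen (fun _ => True) S x -> ideal_gen (fun _ => True) S (c * x).
Proof.
move=> [N [h [s [H ->]]]]; exists N, (fun i => c * h i), s; split=> //.
by rewrite mulr_sumr; apply: eq_bigr => i _; rewrite mulrA.
Qed.

(** * Rescaling weight vectors *)

Lemma div_near (F : realFieldType) (c x y d : F) :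
  d <= 1 / 2 -> `|c - 1| <= d -> `|x - y| <= d -> `|x / c - y| <= 2 * d * (1 + `|y|).
Proof.
move=> d_small near_c near_x.
have d_ge0 : 0 <= d := le_trans (normr_ge0 _) near_c.
have c_ge : 1 / 2 <= c by move: near_c; rewrite ler_norml => /andP[? ?]; lra.
have c_gt0 : 0 < c by lra.
have -> : x / c - y = (x - y + (1 - c) * y) / c by field; rewrite gt_eqF.
rewrite normrM normfV (gtr0_norm c_gt0) ler_pdivrMr //.
apply: le_trans (ler_normD _ _) _; rewrite normrM [`|1 - c|]distrC.
have c_half : 0 <= 2 * c - 1 by lra.
have := mulr_ge0 (mulr_ge0 d_ge0 (addr_ge0 ler01 (normr_ge0 y))) c_half.
have := ler_wpM2r (normr_ge0 y) near_c.
lra.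
Qed.

Definition ray_slice (R : realType) (n : nat) (u : 'I_n.+1 -> R) : 'I_n -> R :=
  fun j => u (lift ord0 j) / - u ord0.

Lemma ray_slice_near (R : realType) (n : nat) (v : 'I_n -> R) (e : R) : 0 < e ->
  exists2 d : R, 0 < d & forall u, (forall i, `|u i - ext_vec (-1) v i| < d) ->
    forall j, `|ray_slice u j - v j| < e.
Proof.
move=> e_gt0; pose B := \sum_(i < n) `|v i|.
have B_ge0 : 0 <= B by apply: sumr_ge0.
have vB j : `|v j| <= B by rewrite /B (bigD1 j) //= lerDl sumr_ge0.
pose d := Num.min (1 / 2) (e / (4 * (1 + B))).
have d_gt0 : 0 < d by rewrite lt_min !divr_gt0 // mulr_gt0 //; lra.
have d_half : d <= 1 / 2 by rewrite /d ge_min lexx.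
have d_e : d * (4 * (1 + B)) <= e.
  rewrite -ler_pdivlMr; last by rewrite mulr_gt0 //; lra.
  by rewrite /d ge_min lexx orbT.
exists d => // u near j.
have near0 := near ord0; have nearj := near (lift ord0 j).
rewrite /ext_vec unlift_none -normrN opprB addrC in near0.
rewrite /ext_vec liftK in nearj.
have := div_near d_half (ltW near0) (ltW nearj).
have : d * (1 + `|v j|) <= d * (1 + B) by rewrite ler_pM2l // lerD2l.
rewrite /ray_slice; lra.
Qed.

Lemma wt_scale (R : realType) (n : nat) (u : 'I_n.+1 -> R) (c : R) b a :
  wt (fun i => c * u i) b a = c * wt u b a.
Proof.
rewrite /wt mulrDr mulr_sumr -mulrA; congr (_ + _).
by apply: eq_bigr => i _; rewrite mulrA.
Qed.

Lemma init_term_scale (K : fieldType) (R : realType) (n : nat) (u : 'I_n.+1 -> R)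
    (c : R) : 0 < c -> init_term (fun i => c * u i) = init_term u :> (pstx K n -> _).
Proof.
move=> c_gt0; apply/funext => F; apply/funext => m; apply/propext.
by split=> -[nz max]; split=> // a b /max; rewrite !wt_scale ler_pM2l.
Qed.

Lemma in_u_ideal_scale (K : fieldType) (R : realType) (n : nat) (Rs : K -> Prop)
    (J : pstx K n -> Prop) (u : 'I_n.+1 -> R) (c : R) :
  0 < c -> in_u_ideal Rs (fun i => c * u i) J = in_u_ideal Rs u J.
Proof. by move=> c_gt0; rewrite /in_u_ideal /is_init_u init_term_scale. Qed.

Lemma in_u_ideal_ray_slice (K : fieldType) (R : realType) (n : nat) (Rs : K -> Prop)
    (J : pstx K n -> Prop) (u : 'I_n.+1 -> R) :
  u ord0 < 0 -> in_u_ideal Rs (ext_vec (-1) (ray_slice u)) J = in_u_ideal Rs u J.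
Proof.
move=> u0_lt0; have c_gt0 : 0 < (- u ord0)^-1 by rewrite invr_gt0 oppr_gt0.
rewrite -(in_u_ideal_scale Rs J u c_gt0); congr in_u_ideal.
apply/funext => i; rewrite /ext_vec /ray_slice.
case: unliftP => [j ->|->]; first by rewrite mulrC.
by rewrite invrN mulNr mulVf ?lt_eqF.
Qed.

(** * Valuation and residue map *)

Section ValuedField.
Variables (K : fieldType) (nu : K -> int).
Hypothesis nu_discrete : is_discrete_valuation nu.

Lemma nuM x y : x != 0 -> y != 0 -> nu (x * y) = nu x + nu y.
Proof. exact: (proj1 nu_discrete). Qed.

Lemma nu1 : nu 1 = 0.
Proof.
have := nuM (oner_neq0 K) (oner_neq0 K); rewrite mulr1.
by move=> /(congr1 (fun z => z - nu 1)); rewrite addrK subrr.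
Qed.

Lemma nuV x : x != 0 -> nu x^-1 = - nu x.
Proof.
move=> x0; have := nuM x0 (invr_neq0 x0); rewrite divff // nu1 => /eqP.
by rewrite eq_sym addrC addr_eq0 => /eqP.
Qed.

Lemma nuN x : nu (- x) = nu x.
Proof.
have [->|x0] := eqVneq x 0; first by rewrite oppr0.
have N1_neq0 : (-1 : K) != 0 by rewrite oppr_eq0 oner_neq0.
have nuN1 : nu (-1) = 0.
  have := nuM N1_neq0 N1_neq0; rewrite mulrNN mulr1 nu1 => /eqP.
  by rewrite eq_sym -mulr2n mulrn_eq0 /= => /eqP.
by rewrite -mulN1r nuM // nuN1 add0r.
Qed.

Lemma vge0 N : vge nu 0 N. Proof. by left. Qed.

Lemma vgeW x N M : vge nu x N -> M <= N -> vge nu x M.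
Proof. by case=> [->|h] hMN; [left|right; apply: le_trans h]. Qed.

Lemma vgeN x N : vge nu x N -> vge nu (- x) N.
Proof. by case=> [->|h]; [left; rewrite oppr0|right; rewrite nuN]. Qed.

Lemma vgeD x y N : vge nu x N -> vge nu y N -> vge nu (x + y) N.
Proof.
case=> [->|hx]; first by rewrite add0r.
case=> [->|hy]; first by rewrite addr0; right.
have [->|x0] := eqVneq x 0; first by rewrite add0r; right.
have [->|y0] := eqVneq y 0; first by rewrite addr0; right.
have [->|s0] := eqVneq (x + y) 0; first by left.
by right; apply: le_trans (proj2 nu_discrete _ _ x0 y0 s0); rewrite le_min hx hy.
Qed.

Lemma vgeB x y N : vge nu x N -> vge nu y N -> vge nu (x - y) N.
Proof. by move=> hx hy; apply/vgeD/vgeN. Qed.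

Lemma vge_sum (I : Type) (r : seq I) (P : pred I) (F : I -> K) N :
  (forall i, P i -> vge nu (F i) N) -> vge nu (\sum_(i <- r | P i) F i) N.
Proof.
by move=> h; elim/big_rec: _ => [|i x Pi hx]; [exact: vge0|exact: vgeD (h _ Pi) hx].
Qed.

Lemma vgeM x y N M : vge nu x N -> vge nu y M -> vge nu (x * y) (N + M).
Proof.
case=> [->|hx]; first by rewrite mul0r; left.
case=> [->|hy]; first by rewrite mulr0; left.
have [->|x0] := eqVneq x 0; first by rewrite mul0r; left.
have [->|y0] := eqVneq y 0; first by rewrite mulr0; left.
by right; rewrite nuM // lerD.
Qed.

Lemma vge_eq0 x : (forall N, vge nu x N) -> x = 0.
Proof. by move=> h; have [|] := h (nu x + 1) => //; rewrite gerDl. Qed.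

Lemma vge_le_nu x N : x != 0 -> vge nu x N -> N <= nu x.
Proof. by move=> /negbTE x0 [/eqP|//]; rewrite x0. Qed.

Lemma in_OKM x y : in_OK nu x -> in_OK nu y -> in_OK nu (x * y).
Proof. by move=> hx hy; have := vgeM hx hy; rewrite addr0. Qed.

Variable p : K.
Hypotheses (p_neq0 : p != 0) (nu_p : nu p = 1).

Lemma nu_expn (j : nat) : nu (p ^+ j) = j%:Z.
Proof.
elim: j => [|j IH]; first by rewrite expr0 nu1.
by rewrite exprS nuM ?expf_neq0 // IH nu_p -addn1 PoszD addrC.
Qed.

Lemma p_unit : p \is a GRing.unit.
Proof. by rewrite unitfE. Qed.

Lemma vge_expz (z : int) : vge nu (p ^ z) z.
Proof.
right; case: z => j; first by rewrite -exprnP nu_expn.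
by rewrite NegzE -invr_expz nuV -?exprnP ?nu_expn ?expf_neq0.
Qed.

Lemma expnK_expz (j : nat) : p ^+ j * p ^ (- j%:Z) = 1.
Proof. by rewrite exprnP -exprzDr ?p_unit // subrr expr0z. Qed.

Variables (k : fieldType) (res : K -> k).
Hypothesis res_residue : is_residue_map nu res.

Lemma resD x y : in_OK nu x -> in_OK nu y -> res (x + y) = res x + res y.
Proof. exact: (proj1 res_residue). Qed.

Lemma resM x y : in_OK nu x -> in_OK nu y -> res (x * y) = res x * res y.
Proof. exact: (proj1 (proj2 res_residue)). Qed.

Lemma res_eq0 x : in_OK nu x -> (res x = 0 <-> vge nu x 1).
Proof. exact: (proj2 (proj2 (proj2 (proj2 res_residue)))). Qed.

Lemma res0 : res 0 = 0.
Proof. by apply/(res_eq0 (vge0 _))/vge0. Qed.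

Lemma resB x y : in_OK nu x -> in_OK nu y -> res (x - y) = res x - res y.
Proof.
by move=> hx hy; rewrite -[in RHS](subrK y x) (resD (vgeB hx hy) hy) addrK.
Qed.

Lemma res_sum (I : Type) (r : seq I) (P : pred I) (F : I -> K) :
  (forall i, P i -> in_OK nu (F i)) ->
  res (\sum_(i <- r | P i) F i) = \sum_(i <- r | P i) res (F i).
Proof.
move=> h; elim: r => [|i r IH]; first by rewrite !big_nil res0.
rewrite !big_cons; case: ifP => Pi //.
by rewrite resD ?IH //; [exact: h|exact: vge_sum].
Qed.

Lemma res_congr x y : in_OK nu x -> in_OK nu y -> vge nu (x - y) 1 -> res x = res y.
Proof.
move=> hx hy /(res_eq0 (vgeB hx hy)).2.
by rewrite resB // => /eqP; rewrite subr_eq0 => /eqP.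
Qed.

Lemma res_neq0_nu x : in_OK nu x -> res x != 0 -> x != 0 /\ nu x = 0.
Proof.
move=> hx hr; have x0 : x != 0 by apply: contraNneq hr => ->; rewrite res0.
split=> //; have nu_ge0 := vge_le_nu x0 hx.
have : ~ vge nu x 1 by move=> /(res_eq0 hx) /eqP; rewrite (negbTE hr).
apply: contra_notP => /eqP nu_neq0; right.
by rewrite -gtz0_ge1 lt_neqAle eq_sym nu_neq0.
Qed.

(** * Digit expansions *)

Variable Rs : K -> Prop.
Hypotheses (Rs_subring : is_subring Rs) (Rs_OK : forall x, Rs x -> in_OK nu x).
Hypothesis Rs_dense : is_dense_in_OK nu Rs.

(* Each digit is 0 or a unit of O_K, so that the initial form of a digit expansion
   does not vanish modulo the maximal ideal. *)
Definition lead_digit (x : K) : K :=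
  if pselect (vge nu x 1) then 0
  else epsilon (inhabits 0) (fun r => Rs r /\ vge nu (x - r) 1).

Definition digit_tail (x : K) (m : nat) : K :=
  iter m (fun y => (y - lead_digit y) / p) x.

Definition digit (x : K) (m : nat) : K := lead_digit (digit_tail x m).

Lemma lead_digit_spec x : in_OK nu x ->
  [/\ Rs (lead_digit x), vge nu (x - lead_digit x) 1
    & lead_digit x = 0 \/ res (lead_digit x) != 0].
Proof.
move=> hx; rewrite /lead_digit; case: pselect => [x_m|x_nm].
  by split; [case: Rs_subring|rewrite subr0|left].
have [Rd hd] := epsilon_spec (inhabits 0) (fun r => Rs r /\ vge nu (x - r) 1)
  (Rs_dense hx 1).
split=> //; right; apply/eqP => /(res_eq0 (Rs_OK Rd)) dm.
by apply: x_nm; have := vgeD hd dm; rewrite subrK.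
Qed.

Lemma digit_tail_OK x m : in_OK nu x -> in_OK nu (digit_tail x m).
Proof.
move=> hx; elim: m => [|m IH] //=.
have [_ hd _] := lead_digit_spec IH.
have p_inv : vge nu p^-1 (-1) by right; rewrite nuV // nu_p.
by have := vgeM hd p_inv; rewrite subrr.
Qed.

Lemma digit_Rs x m : in_OK nu x -> Rs (digit x m).
Proof. by move=> hx; have [] := lead_digit_spec (digit_tail_OK m hx). Qed.

Lemma digit_eq0_or_unit x m : in_OK nu x -> digit x m = 0 \/ res (digit x m) != 0.
Proof. by move=> hx; have [] := lead_digit_spec (digit_tail_OK m hx). Qed.

Lemma digit_expansion x m :
  x = \sum_(b < m) digit x b * p ^+ b + p ^+ m * digit_tail x m.
Proof.
elim: m => [|m IH]; first by rewrite big_ord0 add0r expr0 mul1r.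
rewrite big_ord_recr /= {1}IH -addrA; congr (_ + _).
rewrite /digit exprSr -mulrA [p * _]mulrC divfK //.
by rewrite [_ * p ^+ m]mulrC -mulrDr addrC subrK.
Qed.

Lemma digit_approx x m : in_OK nu x ->
  vge nu (x - \sum_(b < m) digit x b * p ^+ b) m%:Z.
Proof.
move=> hx; rewrite {1}(digit_expansion x m) addrC addKr.
by have := vgeM (vge_expz m%:Z) (digit_tail_OK m hx); rewrite addr0 -exprnP.
Qed.

Lemma digit0 m : digit 0 m = 0.
Proof.
have lead0 : lead_digit 0 = 0 by rewrite /lead_digit; case: pselect => // [[]]; left.
rewrite /digit; suff -> : digit_tail 0 m = 0 by [].
by elim: m => [|m /= ->] //; rewrite lead0 subr0 mul0r.
Qed.


(** * Reduction of polynomials in t and x *)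

Variables (R : realType) (n : nat).
Implicit Types (u : 'I_n.+1 -> R) (v w : 'I_n -> R).

Definition mpoly_OK (m : nat) (q : {mpoly K[m]}) : Prop := forall a, in_OK nu q@_a.

Lemma mpoly_OK0 m : mpoly_OK (0 : {mpoly K[m]}).
Proof. by move=> a; rewrite mcoeff0; left. Qed.

Lemma mpoly_OKD m (q r : {mpoly K[m]}) : mpoly_OK q -> mpoly_OK r -> mpoly_OK (q + r).
Proof. by move=> hq hr a; rewrite mcoeffD; apply: vgeD (hq a) (hr a). Qed.

Lemma mpoly_OKM m (q r : {mpoly K[m]}) : mpoly_OK q -> mpoly_OK r -> mpoly_OK (q * r).
Proof. by move=> hq hr a; rewrite mcoeffM; apply: vge_sum => i _; exact: in_OKM. Qed.

Lemma mpoly_OKZX m c (a : 'X_{1..m}) : in_OK nu c -> mpoly_OK (c *: 'X_[a]).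
Proof.
by move=> hc b; rewrite mcoeffZ mcoeffX; case: (_ == _); rewrite ?mulr1 ?mulr0 //; left.
Qed.

Lemma mpoly_OK_sum m (I : Type) (r : seq I) (P : pred I) (F : I -> {mpoly K[m]}) :
  (forall i, P i -> mpoly_OK (F i)) -> mpoly_OK (\sum_(i <- r | P i) F i).
Proof.
move=> h; elim/big_rec: _ => [|i q Pi hq]; first exact: mpoly_OK0.
exact: mpoly_OKD (h _ Pi) hq.
Qed.

Definition t1_subst (i : 'I_n.+1) : {mpoly K[n]} :=
  if unlift ord0 i is Some j then 'X_j else 1.

Definition eval_t1 (h : {mpoly K[n.+1]}) : {mpoly K[n]} := mmap (@mpolyC n K) t1_subst h.

Lemma eval_t1ZX c m : eval_t1 (c *: 'X_[m]) = c *: 'X_[x_part m].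
Proof.
rewrite /eval_t1 mmapZ mmapX /mmap1 big_ord_recl /t1_subst unlift_none expr1n mul1r.
rewrite mul_mpolyC mpolyXE_id; congr (_ *: _); apply: eq_bigr => i _.
by rewrite liftK /x_part mnmE.
Qed.

Lemma eval_t1_OK h : mpoly_OK h -> mpoly_OK (eval_t1 h).
Proof.
have -> : eval_t1 h = \sum_(m <- msupp h) eval_t1 (h@_m *: 'X_[m]).
  by rewrite {1}(mpolyE h) /eval_t1 raddf_sum.
by move=> hh; apply: mpoly_OK_sum => m _; rewrite eval_t1ZX; apply: mpoly_OKZX.
Qed.

Definition res_mpoly (q : {mpoly K[n]}) : {mpoly k[n]} :=
  \sum_(m <- msupp q) res q@_m *: 'X_[m].

Lemma mcoeff_res_mpoly q a : (res_mpoly q)@_a = res q@_a.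
Proof.
rewrite (mcoeff_sumX xpredT) ?msupp_uniq // andbT.
by case: ifP => // /negbT /memN_msupp_eq0 ->; rewrite res0.
Qed.

Definition res_t1 (h : {mpoly K[n.+1]}) : {mpoly k[n]} := res_mpoly (eval_t1 h).

Lemma res_t10 : res_t1 0 = 0.
Proof. by apply/mpolyP => a; rewrite mcoeff_res_mpoly /eval_t1 raddf0 !mcoeff0 res0. Qed.

Lemma res_t1D h h' : mpoly_OK h -> mpoly_OK h' -> res_t1 (h + h') = res_t1 h + res_t1 h'.
Proof.
move=> /eval_t1_OK hh /eval_t1_OK hh'; apply/mpolyP => a.
by rewrite mcoeffD !mcoeff_res_mpoly /eval_t1 rmorphD mcoeffD resD.
Qed.

Lemma res_t1M h h' : mpoly_OK h -> mpoly_OK h' -> res_t1 (h * h') = res_t1 h * res_t1 h'.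
Proof.
move=> /eval_t1_OK hh /eval_t1_OK hh'; apply/mpolyP => a.
rewrite mcoeff_res_mpoly /eval_t1 rmorphM -/eval_t1 !mcoeffM res_sum => [|i _].
  by apply: eq_bigr => i _; rewrite resM // !mcoeff_res_mpoly.
exact: in_OKM.
Qed.

Lemma res_t1_sum (I : Type) (r : seq I) (P : pred I) (F : I -> {mpoly K[n.+1]}) :
  (forall i, P i -> mpoly_OK (F i)) ->
  res_t1 (\sum_(i <- r | P i) F i) = \sum_(i <- r | P i) res_t1 (F i).
Proof.
move=> h; elim: r => [|i r IH]; first by rewrite !big_nil res_t10.
rewrite !big_cons; case: ifP => Pi //.
by rewrite res_t1D ?IH //; [exact: h|exact: mpoly_OK_sum].
Qed.

Lemma res_t1ZX c m : in_OK nu c -> res_t1 (c *: 'X_[m]) = res c *: 'X_[x_part m].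
Proof.
move=> hc; apply/mpolyP => a; rewrite mcoeff_res_mpoly eval_t1ZX !mcoeffZ !mcoeffX.
by case: (_ == _); rewrite ?mulr1 ?mulr0 ?res0.
Qed.

Definition tx_mnm (b : nat) (a : 'X_{1..n}) : 'X_{1..n.+1} :=
  [multinom if unlift ord0 i is Some j then a j else b | i < n.+1].

Lemma tx_mnm0 b a : tx_mnm b a ord0 = b.
Proof. by rewrite mnmE unlift_none. Qed.

Lemma x_part_tx_mnm b a : x_part (tx_mnm b a) = a.
Proof. by apply/mnmP => i; rewrite !mnmE liftK. Qed.

Lemma tx_mnm_x_part (m : 'X_{1..n.+1}) : tx_mnm (m ord0) (x_part m) = m.
Proof. by apply/mnmP => i; rewrite mnmE; case: unliftP => [j ->|->] //; rewrite mnmE. Qed.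

Lemma wt_ext_vec (v : 'I_n -> R) b a : wt (ext_vec (-1) v) b a = wdot v a - b%:R.
Proof.
rewrite /wt /wdot /ext_vec unlift_none mulN1r addrC; congr (_ - _).
by apply: eq_bigr => i _; rewrite liftK.
Qed.

Definition nu_weight (v : 'I_n -> R) (f : {mpoly K[n]}) (a : 'X_{1..n}) : R :=
  wdot v a - (nu f@_a)%:~R.

Lemma in_nu_coef v f a : (in_nu nu res p v f)@_a =
  if (a \in msupp f) && all (fun a' => nu_weight v f a' <= nu_weight v f a) (msupp f)
  then res (f@_a * p ^ (- nu f@_a)) else 0.
Proof. by rewrite /in_nu mcoeff_sumX // msupp_uniq. Qed.

(** * Initial forms of series in R[[t]][x] *)

Section InitialForm.
Variable F : pstx K n.

Definition nz_series (a : 'X_{1..n}) : Prop := exists b, F a b != 0.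

Definition tord (a : 'X_{1..n}) : nat :=
  if pselect (nz_series a) is left h then ex_minn h else 0.

Lemma tord_spec a :
  nz_series a -> F a (tord a) != 0 /\ forall b, F a b != 0 -> (tord a <= b)%N.
Proof. by rewrite /tord; case: pselect => // h _; case: ex_minnP. Qed.

Lemma tord_min a b : (b < tord a)%N -> F a b = 0.
Proof.
move=> lt_b; apply/eqP/negPn/negP => nz.
have [|_ /(_ b nz)] := @tord_spec a; first by exists b.
by rewrite leqNgt lt_b.
Qed.

Definition lead_weight (v : 'I_n -> R) (a : 'X_{1..n}) : R := wdot v a - (tord a)%:R.

Lemma init_term_nz_series (u : 'I_n.+1 -> R) m : init_term u F m -> nz_series (x_part m).
Proof. by case=> nz _; exists (m ord0). Qed.

Lemma init_term_tord v m : init_term (ext_vec (-1) v) F m -> m ord0 = tord (x_part m).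
Proof.
move=> [nz max]; have [|nzt tmin] := @tord_spec (x_part m); first by exists (m ord0).
apply/eqP; rewrite eqn_leq (tmin _ nz) andbT.
by have := max _ _ nzt; rewrite !wt_ext_vec lerD2l lerN2 ler_nat.
Qed.

Lemma init_term_tx_mnm v a : nz_series a ->
  init_term (ext_vec (-1) v) F (tx_mnm (tord a) a) <->
  forall a', nz_series a' -> lead_weight v a' <= lead_weight v a.
Proof.
move=> nza; rewrite /init_term x_part_tx_mnm tx_mnm0 /lead_weight; split.
  move=> [_ max] a' nza'; have [nzt _] := tord_spec nza'.
  by rewrite -!wt_ext_vec; apply: max.
move=> max; split=> [|a' b nz]; first by case: (tord_spec nza).
have nza' : nz_series a' by exists b.
rewrite !wt_ext_vec; apply: le_trans (max _ nza').
by rewrite lerD2l lerN2 ler_nat; apply: (tord_spec nza').2.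
Qed.

Lemma is_init_u_uniq (u : 'I_n.+1 -> R) h h' : is_init_u u F h -> is_init_u u F h' -> h = h'.
Proof.
move=> hh hh'; apply/mpolyP => m; have [h1 h2] := hh m; have [h1' h2'] := hh' m.
by case: (pselect (init_term u F m)) => it; [rewrite h1 ?h1'|rewrite h2 ?h2'].
Qed.

Variable s : seq 'X_{1..n}.
Hypothesis F_supp : forall a, a \notin s -> forall b, F a b = 0.

Lemma nz_series_supp a : nz_series a -> a \in s.
Proof. by move=> [b]; apply: contraNT => /F_supp ->; rewrite eqxx. Qed.

(* For u = (-1, v) only t^(tord a) x^a can be an initial term, so this finite sum
   is in_u F. *)
Definition init_form (v : 'I_n -> R) : {mpoly K[n.+1]} :=
  \sum_(m <- [seq tx_mnm (tord a) a | a <- undup s] |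
          `[< init_term (ext_vec (-1) v) F m >])
     F (x_part m) (m ord0) *: 'X_[m].

Lemma init_form_init v : is_init_u (ext_vec (-1) v) F (init_form v).
Proof.
have supp_uniq : uniq [seq tx_mnm (tord a) a | a <- undup s].
  rewrite map_inj_in_uniq ?undup_uniq // => a a' _ _ /(congr1 (@x_part n)).
  by rewrite !x_part_tx_mnm.
move=> m; rewrite mcoeff_sumX //; split=> [it|nit]; last by rewrite asboolF ?andbF.
rewrite asboolT // andbT; case: ifP => // /negP[]; apply/mapP; exists (x_part m).
  by rewrite mem_undup; apply/nz_series_supp/(init_term_nz_series it).
by rewrite -(init_term_tord it) tx_mnm_x_part.
Qed.

Lemma exists_init_term v : (exists a, nz_series a) ->
  exists2 a, nz_series a & init_term (ext_vec (-1) v) F (tx_mnm (tord a) a).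
Proof.
move=> [a nza]; have : a \in [seq a <- s | `[< nz_series a >]].
  by rewrite mem_filter asboolT ?nz_series_supp.
move=> /(seq_argmax (lead_weight v)) [a0]; rewrite mem_filter => /andP[/asboolP nz0 _] max0.
exists a0 => //; apply/(init_term_tx_mnm v nz0) => a' nza'.
by apply: max0; rewrite mem_filter asboolT ?nz_series_supp.
Qed.

Hypothesis F_OK : forall a b, in_OK nu (F a b).

Lemma mpoly_OK_init (u : 'I_n.+1 -> R) h : is_init_u u F h -> mpoly_OK h.
Proof.
move=> hh m; have [h1 h2] := hh m.
by case: (pselect (init_term u F m)) => it; [rewrite h1|rewrite h2 //; left].
Qed.

Lemma res_t1_init_form_coef v a : (res_t1 (init_form v))@_a =
  if (a \in s) && `[< init_term (ext_vec (-1) v) F (tx_mnm (tord a) a) >]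
  then res (F a (tord a)) else 0.
Proof.
rewrite res_t1_sum => [|m _]; last exact: mpoly_OKZX.
rewrite big_map (eq_bigr (fun a' => res (F a' (tord a')) *: 'X_[a'])) => [|a' _].
  by rewrite mcoeff_sumX ?undup_uniq // mem_undup.
by rewrite res_t1ZX // x_part_tx_mnm tx_mnm0.
Qed.

Variable g : {mpoly K[n]}.
Hypothesis F_pi : pi_rel nu p F g.

Lemma pi_coef_eq0 a : ~ nz_series a -> g@_a = 0.
Proof.
move=> za; apply: vge_eq0 => N; have [M hM] := F_pi a N.
have := hM M (leqnn M); rewrite big1 ?subr0 // => b _.
by have [->|nz] := eqVneq (F a b) 0; [rewrite mul0r|case: za; exists b].
Qed.

Lemma pi_coef_approx a : nz_series a ->
  vge nu (g@_a - F a (tord a) * p ^+ tord a) ((tord a)%:Z + 1).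
Proof.
move=> nza; set t := tord a; have [M hM] := F_pi a (t%:Z + 1).
pose m := maxn M t.+1; have t_lt : (t < m)%N by rewrite leq_max ltnSn orbT.
have tail : vge nu (\sum_(b < m) F a b * p ^+ b - F a t * p ^+ t) (t%:Z + 1).
  rewrite (bigD1 (Ordinal t_lt)) //= addrAC subrr add0r; apply: vge_sum => b bt.
  have {}bt : (b : nat) != t by apply: contraNneq bt => e; apply/eqP/val_inj.
  have [b_lt|b_ge] := ltnP b t; first by rewrite tord_min // mul0r; apply: vge0.
  have := vgeM (F_OK a b) (vge_expz b%:Z); rewrite add0r -exprnP => /vgeW; apply.
  by rewrite -PoszD lez_nat addn1 ltn_neqAle eq_sym bt.
by have := vgeD (hM m (leq_maxl _ _)) tail; rewrite addrA subrK.
Qed.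

Lemma pi_coef_lead a : nz_series a -> exists e,
  [/\ g@_a = e * p ^+ tord a, in_OK nu e & vge nu (e - F a (tord a)) 1].
Proof.
move=> nza; exists (g@_a * p ^ (- (tord a)%:Z)).
have e_F : vge nu (g@_a * p ^ (- (tord a)%:Z) - F a (tord a)) 1.
  have := vgeM (pi_coef_approx nza) (vge_expz (- (tord a)%:Z)).
  by rewrite mulrBl -mulrA expnK_expz mulr1 addrAC subrr add0r.
split=> //; first by rewrite -mulrA [_ * p ^+ _]mulrC expnK_expz mulr1.
by have := vgeD (vgeW e_F ler01) (F_OK a (tord a)); rewrite subrK.
Qed.

Lemma pi_coef_unit a : nz_series a -> res (F a (tord a)) != 0 ->
  [/\ g@_a != 0, nu g@_a = (tord a)%:Z
    & res (g@_a * p ^ (- nu g@_a)) = res (F a (tord a))].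
Proof.
move=> nza rF; have [e [ge e_OK e_F]] := pi_coef_lead nza.
have res_e : res e = res (F a (tord a)) := res_congr e_OK (F_OK _ _) e_F.
have [e0 nu_e] : e != 0 /\ nu e = 0 by apply: res_neq0_nu; rewrite ?res_e.
have nu_g : nu g@_a = (tord a)%:Z by rewrite ge nuM ?expf_neq0 // nu_e nu_expn add0r.
split=> //; first by rewrite ge mulf_neq0 ?expf_neq0.
by rewrite nu_g ge -mulrA expnK_expz mulr1.
Qed.

Lemma pi_coef_nonunit a : nz_series a -> res (F a (tord a)) = 0 -> g@_a != 0 ->
  (tord a)%:Z + 1 <= nu g@_a.
Proof.
move=> nza rF g0; have [e [ge e_OK e_F]] := pi_coef_lead nza.
have e_m : vge nu e 1 by apply/(res_eq0 e_OK); rewrite (res_congr e_OK (F_OK _ _) e_F).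
apply: vge_le_nu g0 _; rewrite ge addrC.
by have := vgeM e_m (vge_expz (tord a)%:Z); rewrite -exprnP.
Qed.

Lemma nu_weight_le v a : nz_series a -> g@_a != 0 -> nu_weight v g a <= lead_weight v a.
Proof.
move=> nza g0; rewrite /nu_weight /lead_weight lerD2l lerN2 pmulrn ler_int.
have [e [ge e_OK _]] := pi_coef_lead nza; apply: vge_le_nu g0 _; rewrite ge.
by have := vgeM e_OK (vge_expz (tord a)%:Z); rewrite add0r -exprnP.
Qed.

Lemma res_t1_init_form_eq0 v :
  (forall a, init_term (ext_vec (-1) v) F (tx_mnm (tord a) a) -> res (F a (tord a)) = 0) ->
  res_t1 (init_form v) = 0.
Proof.
move=> h; apply/mpolyP => a; rewrite res_t1_init_form_coef mcoeff0.
by case: ifP => // /andP[_ /asboolP /h].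
Qed.

Lemma res_t1_init_form_in_nu v a0 :
  init_term (ext_vec (-1) v) F (tx_mnm (tord a0) a0) -> res (F a0 (tord a0)) != 0 ->
  res_t1 (init_form v) = in_nu nu res p v g.
Proof.
move=> it0 r0; have := init_term_nz_series it0; rewrite x_part_tx_mnm => nz0.
set M := lead_weight v a0.
have W_le : forall a, nz_series a -> lead_weight v a <= M := (init_term_tx_mnm v nz0).1 it0.
have [g0 nu_g0 _] := pi_coef_unit nz0 r0.
have wg0 : nu_weight v g a0 = M by rewrite /nu_weight nu_g0 /M /lead_weight pmulrn.
have nz_supp a : a \in msupp g -> nz_series a.
  rewrite mcoeff_msupp => ga; case: (pselect (nz_series a)) => // /pi_coef_eq0 ga0.
  by rewrite ga0 eqxx in ga.
have max_wgE a : a \in msupp g ->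
    all (fun a' => nu_weight v g a' <= nu_weight v g a) (msupp g) = (M <= nu_weight v g a).
  move=> ga; apply/allP/idP => [max|Mle a' ga'].
    by rewrite -wg0; apply: max; rewrite mcoeff_msupp.
  apply: le_trans Mle; apply: le_trans (W_le _ (nz_supp _ ga')).
  by apply: nu_weight_le (nz_supp _ ga') _; rewrite -mcoeff_msupp.
apply/mpolyP => a; rewrite res_t1_init_form_coef in_nu_coef.
have [nza|za] := pselect (nz_series a); last first.
  rewrite asboolF ?andbF; last by move/init_term_nz_series; rewrite x_part_tx_mnm.
  by rewrite mcoeff_msupp pi_coef_eq0 ?eqxx.
have -> : `[< init_term (ext_vec (-1) v) F (tx_mnm (tord a) a) >] = (M <= lead_weight v a).
  apply/asboolP/idP => [/(init_term_tx_mnm v nza) max|Mle]; first exact: max.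
  by apply/(init_term_tx_mnm v nza) => a' nza'; apply: le_trans (W_le _ nza') Mle.
rewrite (nz_series_supp nza) /=; have [rF|rF] := eqVneq (res (F a (tord a))) 0.
  rewrite rF if_same; case: ifP => // /andP[ga]; rewrite max_wgE // => Mle; exfalso.
  have := pi_coef_nonunit nza rF; rewrite -mcoeff_msupp => /(_ ga).
  rewrite -(ler_int R) intrD => nu_ge; have := W_le _ nza.
  by move: Mle; rewrite /nu_weight /lead_weight pmulrn; lra.
have [ga nu_g res_g] := pi_coef_unit nza rF.
by rewrite mcoeff_msupp ga max_wgE ?mcoeff_msupp // res_g /nu_weight nu_g.
Qed.

Lemma res_t1_init_form_cases v :
  res_t1 (init_form v) = 0 \/ res_t1 (init_form v) = in_nu nu res p v g.
Proof.
case: (pselect (exists2 a, init_term (ext_vec (-1) v) F (tx_mnm (tord a) a)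
                          & res (F a (tord a)) != 0)) => [[a it rF]|none].
  by right; apply: res_t1_init_form_in_nu it rF.
left; apply: res_t1_init_form_eq0 => a it; apply/eqP.
by apply: contra_notT none => rF; exists a.
Qed.

End InitialForm.

(** * Lifting initial forms along pi *)

Lemma in_nu_expnZ v j f : in_nu nu res p v (p ^+ j *: f) = in_nu nu res p v f.
Proof.
have pj0 : p ^+ j != 0 by rewrite expf_neq0.
have suppE : msupp (p ^+ j *: f) =i msupp f by apply/perm_mem/msuppZ.
have nuE a : a \in msupp f -> nu (p ^+ j *: f)@_a = j%:Z + nu f@_a.
  by rewrite mcoeff_msupp => fa; rewrite mcoeffZ nuM // nu_expn.
have wE a : a \in msupp f -> nu_weight v (p ^+ j *: f) a = nu_weight v f a - j%:R.
  by move=> fa; rewrite /nu_weight nuE // intrD -pmulrn; ring.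
apply/mpolyP => a; rewrite !in_nu_coef suppE; case: (boolP (a \in msupp f)) => //= fa.
rewrite (eq_all_r suppE) (eq_in_all (a2 := fun a' => nu_weight v f a' <= nu_weight v f a)).
  case: ifP => // _; rewrite nuE // mcoeffZ [p ^+ j * _]mulrC -mulrA exprnP.
  by rewrite -exprzDr ?p_unit // opprD addrA subrr add0r.
by move=> a' fa' /=; rewrite !wE // lerD2r.
Qed.

Lemma exists_expnZ_OK (f : {mpoly K[n]}) : exists j : nat, mpoly_OK (p ^+ j *: f).
Proof.
exists (\sum_(m <- msupp f) `|nu f@_m|)%N => m; rewrite mcoeffZ.
have [->|fm] := eqVneq f@_m 0; first by rewrite mulr0; left.
right; rewrite nuM ?expf_neq0 // nu_expn -(opprK (nu _)) subr_ge0.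
have := ler_norm (- nu f@_m); rewrite normrN -abszE => /le_trans; apply.
by rewrite lez_nat (bigD1_seq m) ?msupp_uniq ?mcoeff_msupp //= leq_addr.
Qed.

Lemma digit_series_pi (f : {mpoly K[n]}) :
  mpoly_OK f -> pi_rel nu p (fun a b => digit f@_a b) f.
Proof.
move=> fOK a N; exists `|N|%N => m Nm; apply: vgeW (digit_approx m (fOK a)) _.
by apply: le_trans (lez_abs N) _; rewrite lez_nat.
Qed.

Variable I : {mpoly K[n]} -> Prop.
Hypothesis I_ideal : is_ideal I.
Local Notation J := (pi_preimage nu Rs p I).

Lemma coeffs_in1 : coeffs_in Rs (1 : {mpoly K[n.+1]}).
Proof. by move=> m; rewrite mcoeff1; case: (_ == _); case: Rs_subring => ? []. Qed.

Lemma in_nu_lift v f : I f ->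
  exists h, in_u_ideal Rs (ext_vec (-1) v) J h /\ res_t1 h = in_nu nu res p v f.
Proof.
move=> If; have [->|f0] := eqVneq f 0.
  by exists 0; split; [exact: ideal_gen0|rewrite res_t10 /in_nu msupp0 big_nil].
have [j f1_OK] := exists_expnZ_OK f; set f1 := p ^+ j *: f in f1_OK.
pose F a b := digit f1@_a b.
have F_supp a : a \notin msupp f1 -> forall b, F a b = 0.
  by move=> /memN_msupp_eq0 f1a b; rewrite /F f1a digit0.
have F_Rs a b : Rs (F a b) by apply: digit_Rs.
have F_pi : pi_rel nu p F f1 := digit_series_pi f1_OK.
have JF : J F.
  split; first by split=> //; exists (msupp f1).
  by exists f1; split=> //; rewrite /f1 -mul_mpolyC; apply: (proj2 (proj2 I_ideal)).
exists (init_form F (msupp f1) v); split.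
  by apply: ideal_gen_mem; [exact: coeffs_in1|exists F; split=> //; apply: init_form_init].
have f1_neq0 : f1 != 0 by rewrite scaler_eq0 negb_or expf_neq0.
have [a f1a] : exists a, a \in msupp f1.
  case: (msupp f1) (msupp_eq0 f1) => [|a ? _]; last by exists a; rewrite mem_head.
  by rewrite eqxx (negbTE f1_neq0).
have nza : nz_series F a.
  case: (pselect (nz_series F a)) => // /(pi_coef_eq0 F_pi) f1a0.
  by rewrite mcoeff_msupp f1a0 eqxx in f1a.
have [a0 nz0 it0] := exists_init_term F_supp v (ex_intro _ a nza).
have F_OK a' b : in_OK nu (F a' b) by apply: Rs_OK.
rewrite -(in_nu_expnZ v j); apply: (res_t1_init_form_in_nu F_supp F_OK F_pi it0).
have [nzF _] := tord_spec nz0; rewrite /F in nzF *.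
by case: (digit_eq0_or_unit (tord F a0) (f1_OK a0)) nzF => [->|//]; rewrite eqxx.
Qed.

Lemma res_t1_init_in_nu_ideal w F h :
  J F -> is_init_u (ext_vec (-1) w) F h -> in_nu_ideal nu res p w I (res_t1 h).
Proof.
move=> [[F_Rs [s F_supp]] [g [F_pi Ig]]] h_init.
have F_OK a b : in_OK nu (F a b) by apply: Rs_OK.
rewrite (is_init_u_uniq h_init (init_form_init F_supp w)).
have [->|->] := res_t1_init_form_cases F_supp F_OK F_pi w; first exact: ideal_gen0.
by apply: ideal_gen_mem => //; exists g.
Qed.

Lemma res_t1_in_u_ideal w h :
  in_u_ideal Rs (ext_vec (-1) w) J h -> in_nu_ideal nu res p w I (res_t1 h).
Proof.
move=> [N [H [G [HG ->]]]].
have HG_OK i : (i < N)%N -> mpoly_OK (H i) /\ mpoly_OK (G i).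
  move=> lt_i; have [H_Rs [F [[[F_Rs _] _] G_init]]] := HG i lt_i.
  by split=> [a|]; [apply: Rs_OK|apply: mpoly_OK_init G_init => a b; apply: Rs_OK].
rewrite res_t1_sum => [|i _]; last by have [? ?] := HG_OK i (ltn_ord i); apply: mpoly_OKM.
apply: (ideal_gen_sum (f := fun i => res_t1 (H i * G i))) => i lt_i.
have [H_OK G_OK] := HG_OK i lt_i; have [_ [F [JF G_init]]] := HG i lt_i.
by rewrite res_t1M //; apply/ideal_genMl/(res_t1_init_in_nu_ideal JF G_init).
Qed.

Lemma in_nu_ideal_sub v w :
  (forall h, in_u_ideal Rs (ext_vec (-1) v) J h -> in_u_ideal Rs (ext_vec (-1) w) J h) ->
  forall x, in_nu_ideal nu res p v I x -> in_nu_ideal nu res p w I x.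
Proof.
move=> sub x [N [c [f [Hf ->]]]].
apply: (ideal_gen_sum (f := fun i => c i * f i)) => i lt_i; apply: ideal_genMl.
have [_ [f' [If' ->]]] := Hf i lt_i; have [h [Jh <-]] := in_nu_lift v If'.
exact/res_t1_in_u_ideal/sub.
Qed.

Lemma same_in_nu_ideal_ray_slice u w : u ord0 < 0 ->
  same_ideal (in_u_ideal Rs u J) (in_u_ideal Rs (ext_vec (-1) w) J) ->
  same_ideal (in_nu_ideal nu res p (ray_slice u) I) (in_nu_ideal nu res p w I).
Proof.
move=> u0_lt0; rewrite -(in_u_ideal_ray_slice _ _ u0_lt0) => same x.
by split; apply: in_nu_ideal_sub => h /same.
Qed.

End ValuedField.

Theorem corollary3p5 (K k : fieldType) (R : realType) (n : nat)
  (nu : K -> int) (p : K) (res : K -> k) (Rs : K -> Prop)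
  (Hnu : is_discrete_valuation nu) (Hp0 : p != 0) (Hp : nu p = 1)
  (Hcompl : val_complete nu) (Hres : is_residue_map nu res)
  (HRsub : is_subring Rs) (HRO : forall x, Rs x -> in_OK nu x)
  (HRdense : is_dense_in_OK nu Rs) (HRnoeth : is_noetherian Rs) (HpR : Rs p)
  (I : {mpoly K[n]} -> Prop) (HI : is_homog_ideal I) (w : 'I_n -> R) :
  forall v : 'I_n -> R,
    groebner_cone Rs (pi_preimage nu Rs p I) (ext_vec (-1) w) (ext_vec (-1) v) ->
    groebner_polytope nu res p I w v.
Proof.
move=> v cone e e_gt0.
have [d d_gt0 slice_near] := ray_slice_near v e_gt0.
have [u [[u0_lt0 same_u] u_near]] := cone d d_gt0.
exists (ray_slice u); split; last exact: slice_near.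
exact: (same_in_nu_ideal_ray_slice Hnu Hp0 Hp Hres HRsub HRO HRdense (proj1 HI) u0_lt0).
Qed.
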